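(* Let $n \ge 2$ and let $\ell(0) \in \mathbb{N}_0^n$ be an arbitrary initial load vector of the random pairwise load balancing process described in the context, with $m=\sum_i \ell_i(0)$ tokens, average load $\varnothing = m/n$, and initial discrepancy $\Delta = \max_i \ell_i(0) - \min_i \ell_i(0) > 0$. Let $T$ be the first time step at which every node has load in $\{\mathrm{round}(\varnothing)-1, \mathrm{round}(\varnothing), \mathrm{round}(\varnothing)+1\}$. Then with high probability (i.e., with probability $1-O(1/n)$), $T = O(n\log \Delta + n\log n)$, where the constant hidden in $O(\cdot)$ is absolute (independent of $n$, $m$, $\Delta$ and $\ell(0)$).
   Context: Random pairwise load balancing process: $n$ nodes (complete graph), $m$ indistinguishable tokens. The load vector at time $t\in\mathbb{N}_0$ is $\ell(t)=(\ell_1(t),\dots,\ell_n(t))\in\mathbb{Z}^n$, where $\ell_i(t)$ is the number of tokens at node $i$. In each time step $t$, independently of everything before, an ordered pair $(u,v)$ of distinct nodes is chosen uniformly at random, and the loads are updated to $\ell_u(t+1)=\lceil(\ell_u(t)+\ell_v(t))/2\rceil$, $\ell_v(t+1)=\lfloor(\ell_u(t)+\ell_v(t))/2\rfloor$; all other loads are unchanged. The average load is $\varnothing=m/n$ and $\mathrm{round}(\varnothing)$ denotes $\varnothing$ rounded to the nearest integer. *)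

From mathcomp Require Import all_boot.
Set Implicit Arguments. Unset Strict Implicit. Unset Printing Implicit Defensive.

Definition Pair (n : nat) : finType := {p : 'I_n * 'I_n | p.1 != p.2}.

Definition load (n : nat) := {ffun 'I_n -> nat}.

Definition step n (l : load n) (p : Pair n) : load n :=
  let u := (val p).1 in let v := (val p).2 in let s := l u + l v in
  [ffun i => if i == u then uphalf s else if i == v then s./2 else l i].

Definition traj n (l0 : load n) (s : seq (Pair n)) (k : nat) : load n :=
  foldl (@step n) l0 (take k s).

Definition total n (l : load n) : nat := \sum_(i < n) l i.

(* round(m/n), ties rounded up: floor((2m+n)/(2n)) *)
Definition round_avg (m n : nat) : nat := (2 * m + n) %/ (2 * n).

Definition balanced n (r : nat) (l : load n) : bool :=
  [forall i, (r <= l i + 1) && (l i <= r + 1)].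

Definition maxload n (l : load n) : nat := \max_(i < n) l i.
Definition minload n (l : load n) : nat := \big[minn/maxload l]_(i < n) l i.
Definition discrepancy n (l : load n) : nat := maxload l - minload l.

(* the event "T <= t": balanced at some time k <= t *)
Definition hit_by n (l0 : load n) t (s : t.-tuple (Pair n)) : bool :=
  [exists k : 'I_t.+1,
     balanced (round_avg (total l0) n) (traj l0 s k)].

(* number of the (n(n-1))^t equally likely step sequences of length t
   for which T > t *)
Definition bad_count n (l0 : load n) t : nat :=
  #|[set s : t.-tuple (Pair n) | ~~ hit_by l0 s]|.

From Stdlib Require Import ZArith Lia.
From mathcomp Require Import all_boot zify.

Set Implicit Arguments.
Unset Strict Implicit.
Unset Printing Implicit Defensive.

(* Let r = round(m/n) and measure a configuration by
   Psi(l) = sum_i pot r (l_i), the sum of the squared distances of the loads to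
   [r-1, r+1]; Psi vanishes exactly on the target configurations and is at most
   n * Delta^2 initially.  Balancing a pair never increases Psi, by convexity.
   If l_u = r + X with X >= 2, then balancing u with v gains at least
   (l_u - l_v)^2 / 9 when l_v <= l_u - 2, and since m/n is within 1/2 of r
   these gains add up over v to at least (n-1) (X-1)^2 / 9
   (symmetrically when l_u <= r - 2).  Summed over all n(n-1) ordered pairs, one
   random step multiplies E[Psi] by at most 1 - 1/(9n).  As Psi >= 1 as long as
   the configuration is not balanced, Markov's inequality bounds Pr[T > t] by
   (1 - 1/(9n))^t n Delta^2 <= 1/n for t = 36 n (log Delta + log n).
   Probabilities are counted as numbers of step sequences. *)

(* [pot r a] as a function of the signed deviation [a - r]; over [Z] the
   reflection [t |-> -t] becomes a symmetry. *)
Section DeviationPotential.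
Local Open Scope Z_scope.

Definition dev_pot (t : Z) : Z := Z.max 0 (t - 1) ^ 2 + Z.max 0 (- 1 - t) ^ 2.

Lemma dev_pot_opp t : dev_pot (- t) = dev_pot t.
Proof. by rewrite /dev_pot Z.add_comm; congr (Z.max 0 _ ^ 2 + Z.max 0 _ ^ 2); lia. Qed.

Ltac case_max t := let H := fresh in
  destruct (Z.max_spec 0 t) as [[? H]|[? H]]; rewrite ?H; clear H.

Lemma dev_pot_balance_nonneg X B e : 0 <= B -> 0 <= e <= 1 -> 2 * B + e - X <= X ->
  dev_pot (B + e) + dev_pot B <= dev_pot X + dev_pot (2 * B + e - X).
Proof.
move=> *; rewrite /dev_pot.
case_max (B + e - 1); case_max (-1 - (B + e)); case_max (B - 1); case_max (-1 - B);
case_max (X - 1); case_max (-1 - X); case_max (2 * B + e - X - 1);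
case_max (-1 - (2 * B + e - X)); try lia; nia.
Qed.

Lemma dev_pot_gain_nonneg X B e : 0 <= B -> 0 <= e <= 1 -> 2 * B + e - X + 2 <= X -> 2 <= X ->
  9 * (dev_pot (B + e) + dev_pot B) + (2 * X - 2 * B - e) ^ 2 <=
  9 * (dev_pot X + dev_pot (2 * B + e - X)).
Proof.
move=> *; rewrite /dev_pot.
case_max (B + e - 1); case_max (-1 - (B + e)); case_max (B - 1); case_max (-1 - B);
case_max (X - 1); case_max (-1 - X); case_max (2 * B + e - X - 1);
case_max (-1 - (2 * B + e - X)); try lia; nia.
Qed.

(* Reflecting [t] to [-t] swaps the two halves, so it suffices to treat [0 <= B]. *)
Lemma dev_pot_balance X Y B e : X + Y = 2 * B + e -> 0 <= e <= 1 ->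
  dev_pot (B + e) + dev_pot B <= dev_pot X + dev_pot Y.
Proof.
move=> sXY e01; wlog XY : X Y sXY / Y <= X => [hwlog|].
  case: (Z.le_ge_cases Y X) => ?; first exact: hwlog.
  by have := hwlog Y X; lia.
wlog B0 : X Y B sXY XY / 0 <= B => [hwlog|].
  case: (Z.le_gt_cases 0 B) => ?; first exact: hwlog.
  have := hwlog (- Y) (- X) (- B - e); rewrite (_ : - B - e + e = - B); last lia.
  by rewrite (_ : - B - e = - (B + e)) ?dev_pot_opp; lia.
have -> : Y = 2 * B + e - X by lia.
apply: dev_pot_balance_nonneg; lia.
Qed.

Lemma dev_pot_gain X Y B e : X + Y = 2 * B + e -> 0 <= e <= 1 -> Y + 2 <= X ->
  2 <= X \/ Y <= -2 ->
  9 * (dev_pot (B + e) + dev_pot B) + (X - Y) ^ 2 <= 9 * (dev_pot X + dev_pot Y).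
Proof.
move=> sXY e01 XY; wlog B0 : X Y B sXY XY / 0 <= B => [hwlog|].
  case: (Z.le_gt_cases 0 B) => ? hXY; first exact: hwlog.
  have := hwlog (- Y) (- X) (- B - e); rewrite (_ : - B - e + e = - B); last lia.
  rewrite (_ : - B - e = - (B + e)) ?dev_pot_opp; last lia.
  by rewrite (_ : (- Y - - X) = X - Y); lia.
move=> hXY; have -> : Y = 2 * B + e - X by lia.
rewrite (_ : X - (2 * B + e - X) = 2 * X - 2 * B - e); last lia.
apply: dev_pot_gain_nonneg; lia.
Qed.
End DeviationPotential.

Section Potential.
Variable r : nat.

(* Squared distance from [a] to [r-1, r+1]: at most one of the two terms is nonzero. *)
Definition pot a := (a - r.+1) ^ 2 + (r - a.+1) ^ 2.

Definition pot_halves x y := pot (uphalf (x + y)) + pot ((x + y)./2).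

Lemma pot_dev a : Z.of_nat (pot a) = dev_pot (Z.of_nat a - Z.of_nat r).
Proof. rewrite /pot /dev_pot; lia. Qed.

Lemma pot_halvesC x y : pot_halves x y = pot_halves y x.
Proof. by rewrite /pot_halves [x + y]addnC. Qed.

Lemma pot_halves_dev x y :
  Z.of_nat (pot_halves x y) =
  (dev_pot (Z.of_nat (x + y)./2 - Z.of_nat r + Z.of_nat (odd (x + y)))
   + dev_pot (Z.of_nat (x + y)./2 - Z.of_nat r))%Z.
Proof.
rewrite /pot_halves Nat2Z.inj_add !pot_dev uphalf_half.
by congr (dev_pot _ + _)%Z; lia.
Qed.

Lemma pot_halves_le x y : pot_halves x y <= pot x + pot y.
Proof.
have := odd_double_half (x + y); have := pot_halves_dev x y.
have := pot_dev x; have := pot_dev y.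
have := @dev_pot_balance (Z.of_nat x - Z.of_nat r) (Z.of_nat y - Z.of_nat r)
  (Z.of_nat (x + y)./2 - Z.of_nat r) (Z.of_nat (odd (x + y))).
lia.
Qed.

Lemma pot_halves_gain x y : y.+2 <= x -> (r.+2 <= x) || (y.+2 <= r) ->
  9 * pot_halves x y + (x - y) ^ 2 <= 9 * (pot x + pot y).
Proof.
have := odd_double_half (x + y); have := pot_halves_dev x y.
have := pot_dev x; have := pot_dev y.
have := @dev_pot_gain (Z.of_nat x - Z.of_nat r) (Z.of_nat y - Z.of_nat r)
  (Z.of_nat (x + y)./2 - Z.of_nat r) (Z.of_nat (odd (x + y))).
lia.
Qed.

(* Far apart, the gain (hi - lo)^2 pays for the drift term 2 X (hi - lo) - X^2;
   otherwise that term is nonpositive since X >= 2. *)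
Lemma pot_halves_drift X hi lo : 2 <= X -> (r.+2 <= hi) || (lo.+2 <= r) ->
  9 * pot_halves hi lo + 2 * X * hi <= 9 * (pot hi + pot lo) + X ^ 2 + 2 * X * lo.
Proof.
move=> X2 side; have [gap|near] := leqP lo.+2 hi.
  have cauchy : 2 * (X * (hi - lo)) <= X ^ 2 + (hi - lo) ^ 2 := nat_Cauchy X (hi - lo).
  have := pot_halves_gain gap side; move: cauchy.
  have [d ->] : exists d, hi = lo + d by exists (hi - lo); lia.
  rewrite addKn; move: (pot_halves _ _) (pot _ + pot _) => G H.
  lia.
have := leq_mul (leqnn (2 * X)) near; have := leq_mul X2 (leqnn X).
have := pot_halves_le hi lo; move: (pot_halves _ _) (pot _ + pot _) => G H.
lia.
Qed.

Lemma pot_le_sqr lo hi a : lo <= r <= hi -> lo <= a <= hi -> pot a <= (hi - lo) ^ 2.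
Proof.
move=> /andP [lo_r r_hi] /andP [lo_a a_hi]; rewrite /pot.
have [ra|ar] := leqP r a.
  by rewrite (_ : r - a.+1 = 0) ?addn0 ?leq_sqr; lia.
by rewrite (_ : a - r.+1 = 0) ?add0n ?leq_sqr; lia.
Qed.

End Potential.

Definition potential n r (l : load n) := \sum_i pot r (l i).

Lemma bigD2 (I : finType) (F : I -> nat) (u v : I) : u != v ->
  \sum_i F i = F u + F v + \sum_(i | (i != u) && (i != v)) F i.
Proof.
move=> uv; rewrite (bigD1 u) //= (bigD1 v) /=; last by rewrite eq_sym.
by rewrite addnA; congr (_ + _); apply: eq_bigl => i; rewrite andbC.
Qed.

Section BalancingStep.
Variables (n : nat) (l : load n) (p : Pair n).
Let u := (val p).1.
Let v := (val p).2.
Let uv : u != v := valP p.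

Lemma step_other i : i != u -> i != v -> step l p i = l i.
Proof. by move=> /negbTE iu /negbTE iv; rewrite /step ffunE iu iv. Qed.

Lemma step_pair F :
  F (step l p u) + F (step l p v) = F (uphalf (l u + l v)) + F ((l u + l v)./2).
Proof. by rewrite /step !ffunE eqxx eq_sym (negbTE uv) eqxx. Qed.

Lemma total_step : total (step l p) = total l.
Proof.
rewrite /total !(bigD2 _ uv) (step_pair id) /= uphalf_half.
congr (_ + _); first by have := odd_double_half (l u + l v); lia.
by apply: eq_bigr => i /andP [iu iv]; rewrite step_other.
Qed.

Lemma potential_step r :
  potential r (step l p) + (pot r (l u) + pot r (l v)) = potential r l + pot_halves r (l u) (l v).
Proof.
rewrite /potential !(bigD2 _ uv) (step_pair (pot r)).
have -> : \sum_(i | (i != u) && (i != v)) pot r (step l p i) =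
          \sum_(i | (i != u) && (i != v)) pot r (l i).
  by apply: eq_bigr => i /andP [iu iv]; rewrite step_other.
by rewrite /pot_halves; lia.
Qed.

End BalancingStep.

Lemma round_avg_bounds m n : 0 < n ->
  round_avg m n * (2 * n) <= 2 * m + n < (round_avg m n).+1 * (2 * n).
Proof.
by move=> n0; rewrite /round_avg leq_divM ltn_ceil // muln_gt0.
Qed.

(* The bound [Hs - Ls >= n X - n/2] is where the rounding [r = round(m/n)] enters. *)
Lemma drift_arith n X SG SH Hs Ls : 0 < n -> 2 * n * X + 2 * Ls <= 2 * Hs + n ->
  9 * SG + 2 * X * Hs <= 9 * SH + n.-1 * X ^ 2 + 2 * X * Ls ->
  9 * SG + n.-1 * X.-1 ^ 2 <= 9 * SH.
Proof.
case: n => // k _ hdev hsum; have hX := leq_mul (leqnn X) hdev.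
by case: X hdev hsum hX => [|X] /=; nia.
Qed.

Lemma leq_sum_drift (I : finType) (P : pred I) (G H S T : I -> nat) c B D :
  (forall i, P i -> c * G i + D * S i <= c * H i + B + D * T i) ->
  c * \sum_(i | P i) G i + D * \sum_(i | P i) S i <=
  c * \sum_(i | P i) H i + \sum_(i | P i) B + D * \sum_(i | P i) T i.
Proof. by move=> drift; rewrite !big_distrr -!big_split; apply: leq_sum. Qed.

Lemma sum_Pair n (F : 'I_n -> 'I_n -> nat) :
  \sum_(p : Pair n) F (val p).1 (val p).2 = \sum_(u < n) \sum_(v < n | v != u) F u v.
Proof.
rewrite pair_big_dep /= (reindex_omap (val : Pair n -> 'I_n * 'I_n) insub).
  by apply: eq_bigl => p; rewrite valK eqxx andbT eq_sym (valP p).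
by move=> [i j] /= ji; rewrite insubT //= eq_sym.
Qed.

Lemma sum_neq_const n (u : 'I_n) c : \sum_(v | v != u) c = n.-1 * c.
Proof.
rewrite (eq_bigl (fun v => v \in predC1 u)) => [|v]; last by rewrite inE.
by rewrite sum_nat_const cardC1 card_ord.
Qed.

Section PotentialDrop.
Variables (n : nat) (l : load n).
Hypothesis n_gt0 : 0 < n.
Let m := total l.
Let r := round_avg m n.

Lemma sum_neq_load (u : 'I_n) : \sum_(v | v != u) l v + l u = m.
Proof. by rewrite /m /total [in RHS](bigD1 u) //= addnC. Qed.

Lemma potential_drop_row u :
  9 * \sum_(v | v != u) pot_halves r (l u) (l v) + n.-1 * pot r (l u)
    <= 9 * \sum_(v | v != u) (pot r (l u) + pot r (l v)).
Proof.
have /andP [r_lo r_hi] := round_avg_bounds m n_gt0; rewrite -/r in r_lo r_hi.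
have so := sum_neq_load u.
have [hi|not_hi] := leqP r.+2 (l u).
  have [X xE] : exists X, l u = r + X by exists (l u - r); lia.
  rewrite xE in so hi *.
  have := @leq_sum_drift _ (fun v => v != u) (fun v => pot_halves r (r + X) (l v))
    (fun v => pot r (r + X) + pot r (l v)) (fun=> r + X) l 9 (X ^ 2) (2 * X).
  rewrite !sum_neq_const => hsum.
  rewrite [p in n.-1 * p](_ : pot r (r + X) = X.-1 ^ 2); last by rewrite /pot; lia.
  apply: (drift_arith (Hs := n.-1 * (r + X)) (Ls := \sum_(v | v != u) l v) n_gt0).
    by move: r_hi so; clear -n_gt0; nia.
  apply: hsum => v _.
  by apply: pot_halves_drift; rewrite ?hi //; lia.
have [lo|not_lo] := leqP (l u).+2 r.
  have [X rE] : exists X, r = l u + X by exists (r - l u); lia.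
  have := @leq_sum_drift _ (fun v => v != u) (fun v => pot_halves r (l u) (l v))
    (fun v => pot r (l u) + pot r (l v)) l (fun=> l u) 9 (X ^ 2) (2 * X).
  rewrite !sum_neq_const => hsum.
  rewrite [p in n.-1 * p](_ : pot r (l u) = X.-1 ^ 2); last by rewrite /pot rE; lia.
  apply: (drift_arith (Hs := \sum_(v | v != u) l v) (Ls := n.-1 * l u) n_gt0).
    by move: r_lo so; rewrite rE; clear -n_gt0; nia.
  apply: hsum => v _.
  rewrite pot_halvesC [pot r (l u) + _]addnC.
  by apply: pot_halves_drift; rewrite ?lo ?orbT //; lia.
rewrite [p in n.-1 * p](_ : pot r (l u) = 0) ?muln0 ?addn0 ?leq_mul2l /=; last by rewrite /pot; lia.
by apply: leq_sum => v _; apply: pot_halves_le.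
Qed.

Lemma potential_step_sum :
  9 * \sum_(p : Pair n) potential r (step l p) + n.-1 * potential r l
    <= 9 * #|{: Pair n}| * potential r l.
Proof.
have split_step : \sum_(p : Pair n) potential r (step l p) +
    \sum_(p : Pair n) (pot r (l (val p).1) + pot r (l (val p).2)) =
    #|{: Pair n}| * potential r l + \sum_(p : Pair n) pot_halves r (l (val p).1) (l (val p).2).
  rewrite -sum_nat_const -!big_split; apply: eq_bigr => p _; exact: potential_step.
have := sum_Pair (fun u v => pot r (l u) + pot r (l v)).
have := sum_Pair (fun u v => pot_halves r (l u) (l v)).
cbv beta => sumG sumH.
have : \sum_u (9 * \sum_(v | v != u) pot_halves r (l u) (l v) + n.-1 * pot r (l u))
    <= \sum_u 9 * \sum_(v | v != u) (pot r (l u) + pot r (l v)).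
  by apply: leq_sum => u _; apply: potential_drop_row.
rewrite big_split /= -!big_distrr /=.
change (\sum_(u < n) pot r (l u)) with (potential r l).
rewrite -sumG -sumH; move: split_step.
set N := #|_|; set S := \sum_(p : Pair n) potential r _.
lia.
Qed.

End PotentialDrop.

Lemma sum_tuple_cons (T : finType) t (F : t.+1.-tuple T -> nat) :
  \sum_(s : t.+1.-tuple T) F s = \sum_(p : T) \sum_(s : t.-tuple T) F [tuple of p :: s].
Proof.
rewrite pair_big /= (reindex (fun q : T * t.-tuple T => [tuple of q.1 :: q.2])) //=.
exists (fun s => (thead s, [tuple of behead s])) => [[x s] _ | s _] /=.
  by rewrite theadE; congr pair; apply: val_inj.
by rewrite [in RHS](tuple_eta s).
Qed.

Lemma potential_traj_sum n t (l : load n) : 0 < n ->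
  9 ^ t * \sum_(s : t.-tuple (Pair n)) potential (round_avg (total l) n) (traj l s t)
    <= (9 * #|{: Pair n}| - n.-1) ^ t * potential (round_avg (total l) n) l.
Proof.
move=> n_gt0; elim: t l => [|t IH] l.
  rewrite (eq_bigr (fun _ => potential (round_avg (total l) n) l)) => [|s _].
    by rewrite sum_nat_const card_tuple !mul1n.
  by rewrite /traj take0.
set r := round_avg (total l) n; set y := 9 * #|{: Pair n}| - n.-1.
rewrite sum_tuple_cons expnS -mulnA big_distrr /=.
apply: (@leq_trans (9 * \sum_(p : Pair n) y ^ t * potential r (step l p))).
  rewrite leq_mul2l /=; apply: leq_sum => p _.
  by have := IH (step l p); rewrite total_step.
rewrite -big_distrr /= mulnCA expnS -mulnA [y * _]mulnCA leq_mul2l; apply/orP; right.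
have := potential_step_sum l n_gt0; rewrite -/r /y mulnBl.
by move: (\sum_(p : Pair n) _) => S; lia.
Qed.

Lemma bad_count_le_potential n (l0 : load n) t :
  bad_count l0 t <= \sum_(s : t.-tuple (Pair n)) potential (round_avg (total l0) n) (traj l0 s t).
Proof.
rewrite /bad_count -sum1_card big_mkcond /=; apply: leq_sum => s _.
rewrite inE; case: ifP => // not_hit.
have /forallPn [i unbal] : ~~ balanced (round_avg (total l0) n) (traj l0 s t).
  by apply: contra not_hit => bal; apply/existsP; exists ord_max.
rewrite /potential (bigD1 i) //= /pot; lia.
Qed.

Lemma leq_maxload n (l : load n) i : l i <= maxload l.
Proof. exact: leq_bigmax. Qed.

Lemma geq_minload n (l : load n) i : minload l <= l i.
Proof.
rewrite /minload; have : i \in index_enum 'I_n by rewrite mem_index_enum.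
elim: (index_enum _) => // j s IH; rewrite inE big_cons => /orP [/eqP <-|/IH].
  exact: geq_minl.
exact: leq_trans (geq_minr _ _).
Qed.

Lemma potential_le_discrepancy n (l : load n) : 0 < n ->
  potential (round_avg (total l) n) l <= n * discrepancy l ^ 2.
Proof.
move=> n_gt0; have /andP [r_lo r_hi] := round_avg_bounds (total l) n_gt0.
have tot_hi : total l <= n * maxload l.
  by rewrite -[n in n * _]card_ord -sum_nat_const; apply: leq_sum => i _; apply: leq_maxload.
have tot_lo : n * minload l <= total l.
  by rewrite -[n in n * _]card_ord -sum_nat_const; apply: leq_sum => i _; apply: geq_minload.
rewrite -[n in n * _]card_ord -sum_nat_const; apply: leq_sum => i _.
apply: pot_le_sqr; last by rewrite geq_minload leq_maxload.
by apply/andP; split; nia.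
Qed.

Lemma card_Pair_le n : #|{: Pair n}| <= n ^ 2.
Proof. by rewrite card_sig (leq_trans (max_card _)) // card_prod card_ord. Qed.

Lemma expn_tangent_le y d j : y ^ j.+1 + j.+1 * d * y ^ j <= (y + d) ^ j.+1.
Proof.
elim: j => [|j IH]; first by rewrite expn0 !expn1 mul1n muln1.
have := leq_mul (leqnn (y + d)) IH; rewrite !expnS.
move: (y ^ j) ((y + d) ^ j) => P Q; nia.
Qed.

Lemma expn_halving x d j : x <= j.+1 * d -> 2 * (x - d) ^ j.+1 <= x ^ j.+1.
Proof.
move=> x_le; have [dx|xd] := leqP d x; last by rewrite (eqP (ltnW xd)) ?subn_eq0 exp0n ?muln0.
have := expn_tangent_le (x - d) d j; rewrite subnK //.
apply: leq_trans; rewrite mul2n -addnn leq_add2l expnS leq_mul2r.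
by apply/orP; right; apply: leq_trans x_le; rewrite leq_subr.
Qed.

Lemma expn_contraction n N k : 2 <= n -> N <= n ^ 2 ->
  2 ^ k * (9 * N - n.-1) ^ (18 * n * k) <= (9 * N) ^ (18 * n * k).
Proof.
move=> n_ge2 N_le; have n_gt0 : 0 < n by apply: ltnW.
have x_le : 9 * N <= (18 * n).-1.+1 * n.-1 by rewrite prednK ?muln_gt0 //; nia.
have := expn_halving x_le; rewrite prednK ?muln_gt0 // => halves.
case: k => [|k]; first by rewrite !muln0.
by rewrite (expnM (9 * N - n.-1)) (expnM (9 * N)) -expnMn leq_exp2r.
Qed.

Theorem theorem1 :
  exists C1 C2 : nat,
  forall (n : nat) (l0 : load n),
    2 <= n -> 0 < discrepancy l0 ->
    let t := C1 * n * (up_log 2 (discrepancy l0) + up_log 2 n) in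
    n * bad_count l0 t <= C2 * #|{: Pair n}| ^ t.
Proof.
exists 36, 1 => n l0 n_ge2 _; cbv zeta; rewrite mul1n.
have n_gt0 : 0 < n by apply: ltnW.
set N := #|{: Pair n}|; set D := discrepancy l0.
set a := up_log 2 D; set b := up_log 2 n; set T := 36 * n * (a + b).
have hbad : 9 ^ T * bad_count l0 T <= (9 * N - n.-1) ^ T * (n * D ^ 2).
  apply: leq_trans (leq_mul (leqnn _) (bad_count_le_potential l0 T)) _.
  apply: leq_trans (potential_traj_sum T l0 n_gt0) _.
  by rewrite leq_mul2l potential_le_discrepancy ?orbT.
have hnD : n * (n * D ^ 2) <= 2 ^ (2 * (a + b)).
  have D_le : D <= 2 ^ a := up_logP D (isT : 1 < 2).
  have n_le : n <= 2 ^ b := up_logP n (isT : 1 < 2).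
  rewrite mulnDr expnD ![2 * _]mulnC !expnM mulnA mulnn mulnC.
  by apply: leq_mul; rewrite leq_sqr.
have hhalf : 2 ^ (2 * (a + b)) * (9 * N - n.-1) ^ T <= (9 * N) ^ T.
  rewrite (_ : T = 18 * n * (2 * (a + b))); last by rewrite /T; lia.
  exact: expn_contraction n_ge2 (card_Pair_le n).
rewrite -(@leq_pmul2l (9 ^ T)) ?expn_gt0 // mulnCA (leq_trans (leq_mul (leqnn n) hbad)) //.
rewrite mulnCA (leq_trans (leq_mul (leqnn _) hnD)) // mulnC -expnMn.
exact: hhalf.
Qed.
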